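(* Let $G$ be a signed cyclic graph. Then $$F[G](A,B,d)=\sum_{S\in\mathscr{S}(G)}A^{e_{+}(S)+e_{-}(G-S)}B^{e_{-}(S)+e_{+}(G-S)}d^{bc(S)-1},$$ where the sum is over the set $\mathscr{S}(G)$ of all spanning subgraphs $S$ of $G$.
   Context: A signed cyclic graph is a finite graph with a cyclic ordering of half-edges at each vertex (equivalently an orientable ribbon graph) and a sign $\pm$ on each edge. A spanning subgraph $S$ consists of all vertices of $G$ and a subset of the edges, with the induced cyclic orders; $G-S$ is the spanning subgraph with exactly the edges of $G$ not in $S$; $e_{+}(S)$, $e_{-}(S)$ are the numbers of positive and negative edges of $S$; $bc(S)$ is the number of boundary components of the ribbon graph of $S$ (vertex discs with ribbons for the edges of $S$ attached in the cyclic order). The polynomial $F[G]$ is defined by a deletion–marking recursion: edges may be ''marked''; for an unmarked edge $e$, $G-e$ deletes $e$ and $G(\bar e)$ keeps $e$ and marks it; $F[G]=B\,F[G-e]+A\,F[G(\bar e)]$ if $e$ is positive, $F[G]=A\,F[G-e]+B\,F[G(\bar e)]$ if $e$ is negative; and if $H$ is a spanning subgraph all of whose edges are marked, $F[H]=d^{bc(H)-1}$. *)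

From mathcomp Require Import all_boot all_order all_algebra fingroup perm.
Set Implicit Arguments. Unset Strict Implicit. Unset Printing Implicit Defensive.
Import GRing.Theory.

(* A signed cyclic graph (orientable ribbon graph with signed edges).  Half-edges: E * bool,
   the two half-edges of edge e being (e,false) and (e,true).
   [ends h] is the vertex at which half-edge h is attached;
   [rot] is the cyclic ordering: a permutation of half-edges preserving the
   attaching vertex and acting as a single cycle on the half-edges at each
   vertex.  [sgn e = true] means e is positive, false means negative. *)
Record cgraph (V E : finType) := CGraph {
  ends : E * bool -> V;
  rot : {perm (E * bool)};
  rot_ends : forall h, ends (rot h) = ends h;
  rot_cycle : forall h h', ends h = ends h' -> fconnect rot h h';
  sgn : E -> bool
}.

Section Defs.
Variables (V E : finType) (G : cgraph V E).

Definition opp_he (h : E * bool) : E * bool := (h.1, ~~ h.2).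

(* induced cyclic order on the half-edges of the spanning subgraph with edge
   set S: the next half-edge (in the cyclic order of G) belonging to S *)
Definition rotS (S : {set E}) (h : E * bool) : E * bool :=
  let s := [seq iter k.+1 (rot G) h | k <- iota 0 #|{: E * bool}|] in
  nth h s (find (fun x => x.1 \in S) s).

(* boundary-walk permutation of the ribbon graph of S *)
Definition faceS (S : {set E}) (h : E * bool) : E * bool := rotS S (opp_he h).

Definition dartsS (S : {set E}) : {set E * bool} := [set h | h.1 \in S].

(* number of boundary components of the ribbon graph of S: cycles of the
   boundary walk on half-edges of S, plus one for each vertex with no edge
   of S attached (an isolated vertex disc). *)
Definition bc (S : {set E}) : nat :=
  #|[set [set y | fconnect (faceS S) x y] | x in dartsS S]|
  + #|[set v : V | [forall h : E * bool, (h.1 \in S) ==> (ends G h != v)]]|.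

Definition e_pos (S : {set E}) : nat := #|[set e in S | sgn G e]|.
Definition e_neg (S : {set E}) : nat := #|[set e in S | ~~ sgn G e]|.

(* [f Del Mark] is the value of F on the graph obtained from G by deleting
   the edges of Del and marking the edges of Mark (Del, Mark disjoint).
   [Frec f] says f satisfies the deletion–marking recursion and the base
   case (when all remaining edges are marked, the remaining graph is the
   spanning subgraph with edge set Mark). *)
Definition Frec (R : comPzRingType) (A B d : R) (f : {set E} -> {set E} -> R) :=
  (forall Del Mark : {set E}, [disjoint Del & Mark] ->
     forall e, e \notin Del -> e \notin Mark ->
     f Del Mark =
       if sgn G e then (B * f (e |: Del) Mark + A * f Del (e |: Mark))%R
       else (A * f (e |: Del) Mark + B * f Del (e |: Mark))%R)
  /\ (forall Del Mark : {set E}, [disjoint Del & Mark] ->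
        Del :|: Mark = setT -> f Del Mark = (d ^+ (bc Mark).-1)%R).

End Defs.

From mathcomp Require Import all_boot all_order all_algebra.
Set Implicit Arguments. Unset Strict Implicit. Unset Printing Implicit Defensive.
Import GRing.Theory.
Local Open Scope ring_scope.

(* The state sum over the spanning subgraphs S with Mark ⊆ S ⊆ E ∖ Del, in which
   each unmarked edge contributes the weight of being kept or deleted, satisfies
   the deletion–marking recursion (split the sum according to whether e ∈ S) and
   its base case (only S = Mark is left).  Conversely, a solution of the
   recursion is determined by its base values, by induction on the number of
   edges that are neither deleted nor marked.  Nothing about bc enters. *)

Lemma card_setC_setU1 (T : finType) (X : {set T}) x :
  x \notin X -> (#|~: (x |: X)| < #|~: X|)%N.
Proof. by move=> xX; apply: proper_card; rewrite properC properUr ?sub1set. Qed.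

Section StateSum.
Variables (V E : finType) (G : cgraph V E) (R : comPzRingType) (A B d : R).

Definition edge_weight (kept : bool) (e : E) : R := if sgn G e == kept then A else B.

Definition weight (kept : bool) (X : {set E}) : R := \prod_(e in X) edge_weight kept e.

Definition state_sum (Del Mark : {set E}) : R :=
  \sum_(S : {set E} | (Mark \subset S) && (S \subset ~: Del))
    weight true (S :\: Mark) * weight false (~: S :\: Del) * d ^+ (bc G S).-1.

Lemma sgn_stepE (e : E) (x y : R) :
  (if sgn G e then B * x + A * y else A * x + B * y)
  = edge_weight false e * x + edge_weight true e * y.
Proof. by rewrite /edge_weight; case: (sgn G e). Qed.

Lemma weight_setD1 (kept : bool) (X : {set E}) (e : E) :
  e \in X -> weight kept X = edge_weight kept e * weight kept (X :\ e).
Proof. exact: big_setD1. Qed.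

Lemma weight_true (X : {set E}) : weight true X = A ^+ e_pos G X * B ^+ e_neg G X.
Proof.
rewrite /weight /edge_weight /e_pos /e_neg -!prodr_const (bigID (sgn G)) /=.
by congr (_ * _); apply: eq_big => [e | e /andP[_]]; rewrite ?inE //; case: sgn.
Qed.

Lemma weight_false (X : {set E}) : weight false X = B ^+ e_pos G X * A ^+ e_neg G X.
Proof.
rewrite /weight /edge_weight /e_pos /e_neg -!prodr_const (bigID (sgn G)) /=.
by congr (_ * _); apply: eq_big => [e | e /andP[_]]; rewrite ?inE //; case: sgn.
Qed.

Lemma state_sum_rec (Del Mark : {set E}) (e : E) : e \notin Del -> e \notin Mark ->
  state_sum Del Mark = edge_weight false e * state_sum (e |: Del) Mark
                     + edge_weight true e * state_sum Del (e |: Mark).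
Proof.
move=> eD eM; rewrite /state_sum (bigID (fun S : {set E} => e \in S)) /=.
rewrite [RHS]addrC !mulr_sumr.
congr (_ + _); apply: eq_big => S.
- by rewrite subUset sub1set andbC andbA.
- move=> /andP[_ eS]; rewrite (@weight_setD1 true (S :\: Mark) e); last first.
    by rewrite !inE eS eM.
  by rewrite setDDl setUC !mulrA.
- by rewrite setCU setIC -setDE subsetD1 andbA.
- move=> /andP[_ eS]; rewrite (@weight_setD1 false (~: S :\: Del) e); last first.
    by rewrite !inE eS eD.
  by rewrite setDDl setUC mulrCA !mulrA.
Qed.

Lemma state_sum_base (Del Mark : {set E}) :
  [disjoint Del & Mark] -> Del :|: Mark = setT ->
  state_sum Del Mark = d ^+ (bc G Mark).-1.
Proof.
move=> dis cov.
have compDel : ~: Del = Mark.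
  apply/eqP; rewrite eqEsubset -disjoints_subset disjoint_sym dis andbT.
  apply/subsetP => x; rewrite inE => /negbTE xD.
  by move/setP/(_ x): cov; rewrite !inE xD.
have compMark : ~: Mark = Del by rewrite -compDel setCK.
rewrite /state_sum compDel (big_pred1 Mark) => [|S]; last by rewrite /= eqEsubset andbC.
by rewrite compMark !setDv /weight !big_set0 !mul1r.
Qed.

Lemma state_sum_Frec : Frec G A B d state_sum.
Proof.
split; last exact: state_sum_base.
by move=> Del Mark _ e eD eM; rewrite sgn_stepE -state_sum_rec.
Qed.

Lemma Frec_unique (f g : {set E} -> {set E} -> R) :
  Frec G A B d f -> Frec G A B d g ->
  forall Del Mark : {set E}, [disjoint Del & Mark] -> f Del Mark = g Del Mark.
Proof.
move=> [rec_f base_f] [rec_g base_g] Del Mark.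
have [n] := ubnP #|~: (Del :|: Mark)|.
elim: n Del Mark => // n IH Del Mark; rewrite ltnS => free_le dis.
have [cov | ] := eqVneq (Del :|: Mark) setT; first by rewrite base_f ?base_g.
rewrite -subTset => /subsetPn[e _]; rewrite inE negb_or => /andP[eD eM].
have free_lt : (#|~: (e |: (Del :|: Mark))| < n)%N.
  by apply: leq_trans free_le; rewrite card_setC_setU1 // inE negb_or eD eM.
have dis_setU1 (X Y : {set E}) :
    e \notin Y -> [disjoint X & Y] -> [disjoint e |: X & Y].
  by move=> eY; rewrite !disjoints_subset subUset sub1set inE eY.
rewrite (rec_f _ _ dis e eD eM) (rec_g _ _ dis e eD eM) !sgn_stepE.
congr (_ * _ + _ * _); apply: IH.
- by rewrite -setUA.
- exact: dis_setU1.
- by rewrite setUCA.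
- by rewrite disjoint_sym dis_setU1 // disjoint_sym.
Qed.

End StateSum.

Theorem mainTheorem6 (V E : finType) (G : cgraph V E)
    (R : comPzRingType) (A B d : R) :
  (0 < #|V|)%N ->
  (exists f, Frec G A B d f) /\
  (forall f, Frec G A B d f ->
     f set0 set0 =
     \sum_(S : {set E})
        A ^+ (e_pos G S + e_neg G (~: S)) *
        B ^+ (e_neg G S + e_pos G (~: S)) *
        d ^+ (bc G S).-1).
Proof.
move=> _; split; first by exists (state_sum G A B d); exact: state_sum_Frec.
move=> f Ff; rewrite (Frec_unique Ff (state_sum_Frec G A B d)); last first.
  by rewrite disjoints_subset sub0set.
apply: eq_big => [S | S _]; first by rewrite sub0set setC0 subsetT.
rewrite !setD0 weight_true weight_false !exprD; congr (_ * _).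
by rewrite [B ^+ _ * _]mulrC mulrACA.
Qed.
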